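(* Let $\mathbf d=(d_1,\dots,d_m)$, $D=\max_id_i$, and let $\mathcal P_{n,\mathbf d}=\bigoplus_{i=1}^m\mathbb{C}[x_1,\dots,x_n]_{\le d_i}$. Let $\mathrm{GL}_m(\mathbb{C})\times\mathrm{GL}_n(\mathbb{C})$ act on $\mathcal P_{n,\mathbf d}\otimes\mathbb{C}^{n\times m}$ by $(X,Y)\cdot(\mathbf f\otimes A)=((X,Y)\cdot\mathbf f)\otimes YAX^{-1}$, and restrict to a symmetric subgroup $G$ containing $T_m(\mathbb{C})\times T_n(\mathbb{C})$. Then every weight of this representation has the form $(e_i-e_j,\,-\alpha+e_l)\in\mathbb{Z}^{m+n}$ with $1\le i,j\le m$, $1\le l\le n$, $\alpha\in\mathbb{N}^n$, $|\alpha|\le D$; and the weight norm $N$ and weight margin $\gamma$ satisfy $N\le D+2$ and $\gamma\ge (D+2)^{1-m-n}(m+n)^{-1}$.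
   Context: $\mathbb{C}[x_1,\dots,x_n]_{\le d}$: polynomials of degree at most $d$. Actions on systems: $(X\cdot\mathbf f)_i=\sum_jX_{ij}f_j$, $Y\cdot\mathbf f=(f_1\circ Y^{-1},\dots,f_m\circ Y^{-1})$, $(X,Y)\cdot\mathbf f=X\cdot(Y\cdot\mathbf f)$. $T_k(\mathbb{C})$: invertible diagonal $k\times k$ matrices; symmetric subgroup: Zariski closed and closed under conjugate transposition. A weight is $\omega=(\omega',\omega'')\in\mathbb{Z}^m\times\mathbb{Z}^n$ such that some nonzero vector $u$ satisfies $(\mathrm{diag}(t),\mathrm{diag}(s))\cdot u=t^{\omega'}s^{\omega''}u$ for all diagonal invertible matrices, in a weight basis. Weight norm $N=\max_{\omega}\|\omega\|_2$; weight margin $\gamma=\min\{\mathrm{dist}(0,\mathrm{conv}(S)):S\subseteq\Omega,\ 0\notin\mathrm{conv}(S)\}$ over subsets $S$ of the weight set $\Omega$. *)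

From HB Require Import structures.
From mathcomp Require Import all_boot all_order all_algebra.
From mathcomp Require Import mpoly.
From mathcomp Require Import complex.
From mathcomp Require Import Rstruct.

Set Implicit Arguments.
Unset Strict Implicit.
Unset Printing Implicit Defensive.

Import Order.TTheory GRing.Theory Num.Theory.
Local Open Scope ring_scope.

Definition RR : rcfType := Rdefinitions.R.
Definition CC : numClosedFieldType := (RR[i])%C.

(* C[x_1,...,x_n]_{<= d} : polynomials of total degree at most d
   (msize p = 1 + deg p, and msize 0 = 0). *)
Definition poly_le (n d : nat) (p : {mpoly CC[n]}) : bool := (msize p <= d.+1)%N.

Definition lin_subst (n : nat) (M : 'M[CC]_n) : n.-tuple {mpoly CC[n]} :=
  [tuple \sum_(q < n) M k q *: 'X_q | k < n].

Definition poly_compinv (n : nat) (Y : 'M[CC]_n) (f : {mpoly CC[n]}) : {mpoly CC[n]} :=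
  f \mPo lin_subst (invmx Y).

Definition system (m n : nat) := 'I_m -> {mpoly CC[n]}.

Definition actX (m n : nat) (X : 'M[CC]_m) (f : system m n) : system m n :=
  fun i => \sum_(j < m) X i j *: f j.

Definition actY (m n : nat) (Y : 'M[CC]_n) (f : system m n) : system m n :=
  fun i => poly_compinv Y (f i).

Definition act_sys (m n : nat) (X : 'M[CC]_m) (Y : 'M[CC]_n) (f : system m n)
  : system m n := actX X (actY Y f).

(* An element u = sum_{l,j} u_{l,j} (x) E_{l j}  (E_{l j} the elementary
   n x m matrices) is encoded by its components u l j : system m n,
   with u l j i in C[x]_{<= d_i}.                                        *)
Definition tens (m n : nat) := 'I_n -> 'I_m -> system m n.

Definition in_rep (m n : nat) (d : 'I_m -> nat) (u : tens m n) : Prop :=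
  forall l j i, poly_le (d i) (u l j i).

Definition tens_nonzero (m n : nat) (u : tens m n) : Prop :=
  exists l j i, u l j i != 0.

(* (X,Y) . (f (x) A) = ((X,Y) . f) (x) Y A X^{-1}, extended linearly:
   the (l',j') component of (X,Y).u is
   sum_{l,j} (Y A X^{-1} with A = E_{l j})_{l' j'} * (X,Y).(u_{l,j})
   = sum_{l,j} Y_{l' l} (X^{-1})_{j j'} (X,Y).(u_{l,j}).                 *)
Definition act_tens (m n : nat) (X : 'M[CC]_m) (Y : 'M[CC]_n) (u : tens m n)
  : tens m n :=
  fun l' j' i => \sum_(l < n) \sum_(j < m)
                   (Y l' l * invmx X j j') *: act_sys X Y (u l j) i.

Definition tens_scale (m n : nat) (c : CC) (u : tens m n) : tens m n :=
  fun l j i => c *: u l j i.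

Definition nz_vec (k : nat) (t : 'rV[CC]_k) : Prop := forall a, t 0 a != 0.

Definition lmono (k : nat) (t : 'rV[CC]_k) (w : 'I_k -> int) : CC :=
  \prod_(a < k) (t 0 a) ^ (w a).

Definition is_weight (m n : nat) (d : 'I_m -> nat)
  (w' : 'I_m -> int) (w'' : 'I_n -> int) : Prop :=
  exists u : tens m n, in_rep d u /\ tens_nonzero u /\
    forall (t : 'rV[CC]_m) (s : 'rV[CC]_n), nz_vec t -> nz_vec s ->
      act_tens (diag_mx t) (diag_mx s) u
      = tens_scale (lmono t w' * lmono s w'') u.

Definition pair_coords (m n : nat) (X : 'M[CC]_m) (Y : 'M[CC]_n)
  : 'I_(m * m + n * n) -> CC :=
  fun k => row_mx (mxvec X) (mxvec Y) 0 k.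

Definition conjT (k : nat) (M : 'M[CC]_k) : 'M[CC]_k := (map_mx Num.conj M)^T.

Definition symmetric_subgroup (m n : nat) (G : 'M[CC]_m -> 'M[CC]_n -> Prop) : Prop :=
  (forall X Y, G X Y -> X \in unitmx /\ Y \in unitmx) /\
  G 1%:M 1%:M /\
  (forall X Y X' Y', G X Y -> G X' Y' -> G (X *m X') (Y *m Y')) /\
  (forall X Y, G X Y -> G (invmx X) (invmx Y)) /\
  (* Zariski closed in GL_m x GL_n *)
  (exists P : {mpoly CC[m * m + n * n]} -> Prop,
     forall X Y, G X Y <->
       [/\ X \in unitmx, Y \in unitmx &
           forall p, P p -> p.@[pair_coords X Y] = 0]) /\
  (forall X Y, G X Y -> G (conjT X) (conjT Y)).

Definition contains_torus (m n : nat) (G : 'M[CC]_m -> 'M[CC]_n -> Prop) : Prop :=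
  forall (t : 'rV[CC]_m) (s : 'rV[CC]_n), nz_vec t -> nz_vec s ->
    G (diag_mx t) (diag_mx s).

Definition wnorm (m n : nat) (a : 'I_m -> RR) (b : 'I_n -> RR) : RR :=
  Num.sqrt (\sum_(i < m) a i ^+ 2 + \sum_(l < n) b l ^+ 2).

Definition in_conv (m n : nat) (S : ('I_m -> int) -> ('I_n -> int) -> Prop)
  (p' : 'I_m -> RR) (p'' : 'I_n -> RR) : Prop :=
  exists (k : nat) (v' : 'I_k -> 'I_m -> int) (v'' : 'I_k -> 'I_n -> int)
         (lam : 'I_k -> RR),
    (forall r, S (v' r) (v'' r)) /\ (forall r, 0 <= lam r) /\
    \sum_(r < k) lam r = 1 /\
    (forall i, p' i = \sum_(r < k) lam r * (v' r i)%:~R) /\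
    (forall l, p'' l = \sum_(r < k) lam r * (v'' r l)%:~R).

Definition weight_norm_le (m n : nat) (Om : ('I_m -> int) -> ('I_n -> int) -> Prop)
  (c : RR) : Prop :=
  forall w' w'', Om w' w'' -> wnorm (fun i => (w' i)%:~R) (fun l => (w'' l)%:~R) <= c.

(* c <= gamma, where gamma = min over subsets S of Om with 0 notin conv(S) of
   dist(0, conv S) = inf_{p in conv S} ||p||_2. *)
Definition weight_margin_ge (m n : nat) (Om : ('I_m -> int) -> ('I_n -> int) -> Prop)
  (c : RR) : Prop :=
  forall S : ('I_m -> int) -> ('I_n -> int) -> Prop,
    (forall w' w'', S w' w'' -> Om w' w'') ->
    ~ in_conv S (fun _ => 0) (fun _ => 0) ->
    forall p' p'', in_conv S p' p'' -> c <= wnorm p' p''.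

Definition evec (k : nat) (i : 'I_k) : 'I_k -> int := fun a => (a == i)%:R.

(* The torus element (diag t, diag s) multiplies the monomial x^alpha
   of the i-th polynomial in the (l, j) component by t_i t_j^-1 s_l s^-alpha, so
   comparing coefficients shows that every weight is (e_i - e_j, e_l - alpha) with
   |alpha| <= d_i <= D.  Such a weight w has |w|^2 + 1 <= (D + 2)^2 and is orthogonal
   to h = (1, .., 1, 0, .., 0).  For the margin, a point p = lam M of the convex hull
   of some weights (the rows of M), a hull avoiding 0, is rewritten
   Caratheodory-style with linearly independent rows; orthogonality to h leaves at
   most m + n - 1 of them.  Picking columns J with M_J invertible and y = M_J^-1 1 gives
   1 = <p_J, y> <= K |p| max |y_a|, and Cramer's rule together with Hadamard's
   inequality and |det M_J| >= 1 bounds |y_a| by (D + 2)^K. *)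

From HB Require Import structures.
From mathcomp Require Import all_boot all_order all_algebra.
From mathcomp Require Import mpoly complex Rstruct.
From mathcomp Require Import zify ring lra.
Set Implicit Arguments. Unset Strict Implicit. Unset Printing Implicit Defensive.
Import Order.TTheory GRing.Theory Num.Theory.
Local Open Scope ring_scope.

Lemma ler_sum_inj (R : numDomainType) (K k : nat) (g : 'I_K -> 'I_k) (F : 'I_k -> R) :
  injective g -> (forall a, 0 <= F a) -> \sum_(c < K) F (g c) <= \sum_(a < k) F a.
Proof.
move=> g_inj F_ge0; rewrite -(big_imset F (A := predT)); last by move=> x y _ _ /g_inj.
rewrite [leRHS](bigID (mem [set g x | x in predT])) /= lerDl.
exact: sumr_ge0.
Qed.

Lemma norm_det_intr_ge1 (R : numDomainType) (K : nat) (A : 'M[int]_K) :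
  \det (map_mx intr A : 'M[R]_K) != 0 -> 1 <= `|\det (map_mx intr A : 'M[R]_K)|.
Proof.
rewrite det_map_mx -intr_norm ler1z -gtz0_ge1 normr_gt0.
by apply: contra => /eqP ->; rewrite rmorph0.
Qed.

Lemma cramer_rule (F : fieldType) (K : nat) (A : 'M[F]_K) (v : 'cV[F]_K) (a : 'I_K) :
  A \in unitmx ->
  (invmx A *m v) a 0 = \det (\matrix_(b, c) if c == a then v b 0 else A b c) / \det A.
Proof.
move=> Au; rewrite /invmx Au mxE [\det (\matrix_(b, c) _)](expand_det_col _ a) mulr_suml.
apply: eq_bigr => b _; rewrite !mxE eqxx.
have -> : cofactor (\matrix_(b, c) if c == a then v b 0 else A b c) b a = cofactor A b a.
  rewrite /cofactor; congr (_ * \det _).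
  by apply/matrixP => i j; rewrite !mxE eq_sym (negPf (neq_lift _ _)).
by rewrite mulrC [_^-1 * _]mulrC mulrA.
Qed.

Lemma invmx_diag (F : fieldType) (k : nat) (t : 'rV[F]_k) :
  (forall a, t 0 a != 0) -> invmx (diag_mx t) = diag_mx (\row_a (t 0 a)^-1).
Proof.
move=> t_neq0; have e : diag_mx t *m diag_mx (\row_a (t 0 a)^-1) = 1%:M.
  by rewrite mulmx_diag; apply/matrixP => i j; rewrite !mxE divff.
have [tu _] := mulmx1_unit e.
by rewrite -[RHS](mulKmx tu) e mulmx1.
Qed.

Lemma sum_diag_mx_scale (R : pzRingType) (V : lmodType R) (k : nat) (d : 'rV[R]_k)
    (i : 'I_k) (F : 'I_k -> V) :
  \sum_q diag_mx d i q *: F q = d 0 i *: F i.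
Proof.
rewrite (bigD1 i) //= big1 => [|q /negPf qi]; first by rewrite mxE eqxx addr0.
by rewrite mxE (eq_sym i) qi mulr0n scale0r.
Qed.

Lemma exprz_inj (F : numFieldType) (c : F) : 0 < c -> c != 1 -> injective (exprz c).
Proof.
move=> c_gt0 c_neq1 x y; rewrite /= => cxy; apply/eqP; rewrite -subr_eq0.
have cu : c \is a GRing.unit by rewrite unitfE gt_eqF.
have : c ^ (x - y) == 1 by rewrite exprzDr // cxy -exprzDr // subrr.
by rewrite pexprz_eq1 ?ltW // (negPf c_neq1) orbF.
Qed.

Lemma exprzN_div_le (F : realFieldType) (N x : F) (k : nat) :
  (0 < k)%N -> 1 <= N -> 1 <= k%:R * N ^+ k.-1 * x -> N ^ (1 - k%:Z) / k%:R <= x.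
Proof.
move=> k_gt0 N_ge1; have Nk_gt0 : 0 < N ^+ k.-1 by rewrite exprn_gt0 // (lt_le_trans ltr01).
have -> : N ^ (1 - k%:Z) = (N ^+ k.-1)^-1 by rewrite exprnN; congr (_ ^ _); lia.
by rewrite -invfM -[_^-1]mulr1 ler_pdivrMl ?mulr_gt0 ?ltr0n // [_ * k%:R]mulrC.
Qed.

Lemma mcoeff_comp_diag (R : comRingType) (n : nat) (c : 'I_n -> R) (f : {mpoly R[n]})
    (al : 'X_{1..n}) :
  (f \mPo [tuple c k *: 'X_k | k < n])@_al = f@_al * \prod_k c k ^+ al k.
Proof.
have compX (mu : 'X_{1..n}) : 'X_[mu] \mPo [tuple c k *: 'X_k | k < n] =
    (\prod_k c k ^+ mu k) *: 'X_[mu].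
  rewrite comp_mpolyX mpolyXE_id -scaler_prod; apply: eq_bigr => i _.
  by rewrite tnth_mktuple exprZn.
rewrite comp_mpolyEX raddf_sum /=.
under eq_bigr do rewrite compX scalerA mcoeffZ mcoeffX.
have [al_in|al_notin] := boolP (al \in msupp f).
  rewrite (bigD1_seq al) //= eqxx mulr1 addrC big1 ?add0r // => mu /negPf ->.
  by rewrite mulr0.
rewrite big1_seq => [|mu /andP[_ mu_in]]; last first.
  by case: eqP mu_in al_notin => [-> ->|] //; rewrite mulr0.
by move: al_notin; rewrite -mcoeff_eq0 => /eqP ->; rewrite mul0r.
Qed.

(** * Hadamard's inequality *)

Section Hadamard.
Variable R : realFieldType.

Lemma mulmx_trmx_row (k : nat) (x : 'rV[R]_k) : (x *m x^T) 0 0 = \sum_j x 0 j ^+ 2.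
Proof. by rewrite mxE; apply: eq_bigr => j _; rewrite mxE expr2. Qed.

Lemma mulmx_trmx_row_eq0 (k : nat) (x : 'rV[R]_k) : x *m x^T = 0 -> x = 0.
Proof.
move=> /matrixP /(_ 0 0); rewrite mulmx_trmx_row mxE => /eqP.
rewrite psumr_eq0 => [/allP x0|j _]; last exact: sqr_ge0.
apply/rowP => j; rewrite mxE; apply/eqP; rewrite -sqrf_eq0.
exact: (implyP (x0 j (mem_index_enum _))).
Qed.

Lemma det_gram_col_mx_eq0 (r k : nat) (b : 'rV[R]_k) (A : 'M[R]_(r, k)) :
  A *m A^T \notin unitmx -> \det (col_mx b A *m (col_mx b A)^T) = 0.
Proof.
rewrite unitmxE unitfE negbK => /det0P [v v0 vAA].
have vA : v *m A = 0.
  by apply: mulmx_trmx_row_eq0; rewrite trmx_mul mulmxA -(mulmxA v) vAA mul0mx.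
apply/eqP/det0P; exists (row_mx 0 v : 'rV_(1 + r)).
  by apply: contra v0 => /eqP/(congr1 rsubmx); rewrite row_mxKr linear0 => ->.
by rewrite mulmxA mul_row_col mul0mx add0r vA mul0mx.
Qed.

(* Subtracting from b its orthogonal projection onto the row space of A does
   not change the Gram determinant, and only shortens b. *)
Lemma det_gram_col_mx_unit (r k : nat) (b : 'rV[R]_k) (A : 'M[R]_(r, k)) :
  A *m A^T \in unitmx -> exists2 q : 'rV[R]_k,
    \det (col_mx b A *m (col_mx b A)^T) = (\sum_j q 0 j ^+ 2) * \det (A *m A^T)
    & \sum_j q 0 j ^+ 2 <= \sum_j b 0 j ^+ 2.
Proof.
move=> AAu; pose c := b *m A^T *m invmx (A *m A^T); pose q : 'rV[R]_k := b - c *m A.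
have qA : q *m A^T = 0 by rewrite mulmxBl -!mulmxA mulVmx // mulmx1 subrr.
have AqT : A *m q^T = 0 by apply: trmx_inj; rewrite trmx_mul trmxK qA trmx0.
have qcA : q *m (c *m A)^T = 0 by rewrite trmx_mul mulmxA qA mul0mx.
have -> : b = q + c *m A by rewrite subrK.
clearbody q c; exists q.
  have -> : col_mx (q + c *m A) A = block_mx 1%:M c 0 1%:M *m col_mx q A.
    by rewrite mul_block_col !mul1mx mul0mx add0r.
  rewrite trmx_mul !mulmxA det_mulmx -mulmxA det_mulmx det_tr det_ublock !det1.
  rewrite tr_col_mx mul_col_row qA AqT det_ublock det_mx11 mulmx_trmx_row.
  by rewrite !mul1r mulr1.
have cAq : c *m A *m q^T = 0 by apply: trmx_inj; rewrite trmx_mul trmxK qcA trmx0.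
rewrite -!mulmx_trmx_row linearD /= mulmxDl !mulmxDr qcA cAq addr0 add0r [leRHS]mxE lerDl.
by rewrite mulmx_trmx_row sumr_ge0 // => j _; exact: sqr_ge0.
Qed.

Lemma det_gram_col_mx_le (r k : nat) (b : 'rV[R]_k) (A : 'M[R]_(r, k)) :
  0 <= \det (A *m A^T) ->
  0 <= \det (col_mx b A *m (col_mx b A)^T) <= (\sum_j b 0 j ^+ 2) * \det (A *m A^T).
Proof.
have b2_ge0 : 0 <= \sum_j b 0 j ^+ 2 by apply: sumr_ge0 => j _; exact: sqr_ge0.
have [AAu|AAnu] := boolP (A *m A^T \in unitmx) => AA_ge0.
  have [q -> qb] := det_gram_col_mx_unit b AAu.
  have q2_ge0 : 0 <= \sum_j q 0 j ^+ 2 by apply: sumr_ge0 => j _; exact: sqr_ge0.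
  by rewrite mulr_ge0 //= ler_wpM2r.
by rewrite det_gram_col_mx_eq0 // lexx mulr_ge0.
Qed.

Lemma hadamard_gram (r k : nat) (A : 'M[R]_(r, k)) :
  0 <= \det (A *m A^T) <= \prod_(i < r) \sum_(j < k) A i j ^+ 2.
Proof.
elim: r A => [|r IH] A; first by rewrite det_mx00 big_ord0 lexx ler01.
set b := usubmx (A : 'M_(1 + r, k)); set A' := dsubmx (A : 'M_(1 + r, k)).
have bE : \sum_j b 0 j ^+ 2 = \sum_j A ord0 j ^+ 2.
  by apply: eq_bigr => j _; rewrite mxE; congr (A _ _ ^+ 2); apply: val_inj.
have A'E : \prod_i \sum_j A' i j ^+ 2 = \prod_i \sum_j A (lift ord0 i) j ^+ 2.
  apply: eq_bigr => i _; apply: eq_bigr => j _.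
  by rewrite mxE; congr (A _ _ ^+ 2); apply: val_inj.
have [IH0 IHle] := andP (IH A').
have := det_gram_col_mx_le b IH0; rewrite /b /A' vsubmxK -/A' => /andP[-> le_bA].
apply: (le_trans le_bA); rewrite big_ord_recl -bE -A'E ler_pM //.
by apply: sumr_ge0 => j _; exact: sqr_ge0.
Qed.

Lemma hadamard (r : nat) (A : 'M[R]_r) :
  \det A ^+ 2 <= \prod_(i < r) \sum_(j < r) A i j ^+ 2.
Proof. by have /andP[_] := hadamard_gram A; rewrite det_mulmx det_tr -expr2. Qed.

End Hadamard.

(** * Distance from the origin to a convex hull of integer rows *)

Section ConvexMargin.
Variable R : rcfType.

Definition row_norm (k : nat) (p : 'rV[R]_k) : R := Num.sqrt (\sum_a p 0 a ^+ 2).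

Definition convex_row (K : nat) (lam : 'rV[R]_K) : Prop :=
  (forall r, 0 <= lam 0 r) /\ \sum_r lam 0 r = 1.

Definition zero_notin_conv_rows (K k : nat) (M : 'M[R]_(K, k)) : Prop :=
  forall mu : 'rV[R]_K, convex_row mu -> mu *m M != 0.

Lemma convex_row_gt0 (K : nat) (lam : 'rV[R]_K) : convex_row lam -> (0 < K)%N.
Proof. by case: K lam => // lam [_]; rewrite big_ord0 => /eqP; rewrite eq_sym oner_eq0. Qed.

Lemma norm_le_row_norm (k : nat) (p : 'rV[R]_k) (a : 'I_k) : `|p 0 a| <= row_norm p.
Proof.
rewrite -sqrtr_sqr ler_sqrt; last by apply: sumr_ge0 => b _; exact: sqr_ge0.
by rewrite (bigD1 a) //= lerDl; apply: sumr_ge0 => b _; exact: sqr_ge0.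
Qed.

(* The appended 1 in the row bound accounts for the column of ones. *)
Lemma hadamard_col_ones (K : nat) (A : 'M[R]_K) (a : 'I_K) (N : R) :
  0 <= N -> (forall b, \sum_c A b c ^+ 2 + 1 <= N ^+ 2) ->
  `|\det (\matrix_(b, c) if c == a then 1 else A b c)| <= N ^+ K.
Proof.
move=> N_ge0 A_le; rewrite -(ler_sqr (normr_ge0 _)) ?nnegrE ?exprn_ge0 //.
rewrite real_normK ?num_real // -exprM mulnC exprM.
apply: (le_trans (hadamard _)).
have -> : N ^+ 2 ^+ K = \prod_(b < K) N ^+ 2 by rewrite prodr_const card_ord.
apply: ler_prod => b _; rewrite sumr_ge0 => [|c _]; last exact: sqr_ge0.
apply: le_trans (A_le b); rewrite (bigD1 a) //= [X in _ <= X + _](bigD1 a) //= !mxE eqxx.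
under eq_bigr => c /negPf ca do rewrite mxE ca.
by have := sqr_ge0 (A b a); rewrite expr1n; lra.
Qed.

Lemma norm_invmx_ones_le (K : nat) (A : 'M[int]_K) (N : R) (a : 'I_K) :
  0 <= N -> (map_mx intr A : 'M[R]_K) \in unitmx ->
  (forall b, \sum_c ((A b c)%:~R : R) ^+ 2 + 1 <= N ^+ 2) ->
  `|(invmx (map_mx intr A : 'M[R]_K) *m (const_mx 1 : 'cV[R]_K)) a 0| <= N ^+ K.
Proof.
move=> N_ge0 Au A_le; rewrite cramer_rule // normrM normfV.
have A_ge1 : 1 <= `|\det (map_mx intr A : 'M[R]_K)|.
  by apply: norm_det_intr_ge1; rewrite -unitfE -unitmxE.
have -> : \matrix_(b, c) (if c == a then (const_mx 1 : 'cV[R]_K) b 0 else map_mx intr A b c) =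
    \matrix_(b, c) (if c == a then 1 else map_mx intr A b c) :> 'M[R]_K.
  by apply/matrixP => b c; rewrite !mxE.
have A_le' b : \sum_c (map_mx intr A : 'M[R]_K) b c ^+ 2 + 1 <= N ^+ 2.
  by under eq_bigr do rewrite mxE; exact: A_le.
apply: le_trans (hadamard_col_ones a N_ge0 A_le').
by rewrite ler_pdivrMr ?ler_peMr ?normr_ge0 // (lt_le_trans ltr01).
Qed.

Lemma row_normZ (k : nat) (c : R) (p : 'rV[R]_k) :
  0 <= c -> row_norm (c *: p) = c * row_norm p.
Proof.
move=> c_ge0; rewrite /row_norm -[in RHS](ger0_norm c_ge0) -sqrtr_sqr -sqrtrM ?sqr_ge0 //.
by rewrite mulr_sumr; congr Num.sqrt; apply: eq_bigr => a _; rewrite mxE exprMn.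
Qed.

Lemma conv_rows_norm_ge_row_free (K k : nat) (Mi : 'M[int]_(K, k)) (lam : 'rV[R]_K)
    (N : R) :
  0 <= N -> row_free (map_mx intr Mi : 'M[R]_(K, k)) ->
  (forall r, \sum_a ((Mi r a)%:~R : R) ^+ 2 + 1 <= N ^+ 2) -> \sum_r lam 0 r = 1 ->
  1 <= K%:R * N ^+ K * row_norm (lam *m map_mx intr Mi).
Proof.
set M := map_mx intr Mi => N_ge0 Mfree M_le lam1; set p := lam *m M.
have MTfull : row_full M^T by rewrite /row_full mxrank_tr.
pose g := fullrankfun MTfull; pose MJi := \matrix_(r, a) Mi r (g a).
have MJE : map_mx intr MJi = (rowsub g M^T)^T :> 'M[R]_K by apply/matrixP => r a; rewrite !mxE.
have MJu : (map_mx intr MJi : 'M[R]_K) \in unitmx by rewrite MJE unitmx_tr fullrowsub_unit.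
have MJ_le b : \sum_c ((MJi b c)%:~R : R) ^+ 2 + 1 <= N ^+ 2.
  apply: le_trans (M_le b); rewrite lerD2r; under eq_bigr do rewrite mxE.
  by apply: ler_sum_inj (@fullrankfun_inj _ _ _ _ MTfull) _ => c; exact: sqr_ge0.
pose y : 'cV[R]_K := invmx (map_mx intr MJi : 'M[R]_K) *m const_mx 1.
have one_eq : 1 = \sum_a p 0 (g a) * y a 0.
  have : (lam *m (map_mx intr MJi : 'M[R]_K) *m y) 0 0 = 1.
    rewrite -mulmxA mulKVmx // mxE -[RHS]lam1.
    by apply: eq_bigr => r _; rewrite mxE mulr1.
  rewrite mxE => <-; apply: eq_bigr => a _; congr (_ * _).
  by rewrite !mxE; apply: eq_bigr => r _; rewrite !mxE.
rewrite {1}one_eq; apply: le_trans (ler_norm _) _; apply: le_trans (ler_norm_sum _ _ _) _.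
apply: (@le_trans _ _ (\sum_(a < K) row_norm p * N ^+ K)).
  apply: ler_sum => a _; rewrite normrM ler_pM ?norm_le_row_norm //.
  exact: norm_invmx_ones_le.
by rewrite sumr_const card_ord [leRHS]mulrC mulr_natl mulrnAr.
Qed.

Lemma ratio_test (K : nat) (lam w : 'rV[R]_K) (r1 : 'I_K) :
  (forall r, 0 <= lam 0 r) -> 0 < w 0 r1 ->
  exists t r0, [/\ 0 <= t, forall r, 0 <= (lam - t *: w) 0 r & (lam - t *: w) 0 r0 = 0].
Proof.
move=> lam_ge0 w_r1.
have [r0 w_r0 r0_min] := @arg_minP _ R _ r1 (fun r => 0 < w 0 r) (fun r => lam 0 r / w 0 r) w_r1.
exists (lam 0 r0 / w 0 r0), r0; split.
- by rewrite divr_ge0 // ltW.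
- move=> r; rewrite !mxE subr_ge0; have [w_r|w_r] := ltrP 0 (w 0 r).
    by rewrite -ler_pdivlMr // r0_min.
  by apply: le_trans (lam_ge0 r); rewrite mulr_ge0_le0 // divr_ge0 // ltW.
- by rewrite !mxE divfK ?subrr // gt_eqF.
Qed.

Lemma conv_rows_nonneg_eq0 (K k : nat) (M : 'M[R]_(K, k)) (u : 'rV[R]_K) :
  zero_notin_conv_rows M -> (forall r, 0 <= u 0 r) -> u *m M = 0 -> u = 0.
Proof.
move=> M0 u_ge0 uM; apply/eqP; apply: contraT => u_neq0.
have su_gt0 : 0 < \sum_r u 0 r.
  rewrite lt_def psumr_eq0 ?sumr_ge0 // andbT; apply: contra u_neq0 => /allP u0.
  by apply/eqP/rowP => r; rewrite mxE; apply/eqP/(implyP (u0 r (mem_index_enum _))).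
have : convex_row ((\sum_r u 0 r)^-1 *: u).
  split=> [r|]; first by rewrite mxE mulr_ge0 // invr_ge0 ltW.
  by under eq_bigr do rewrite mxE; rewrite -mulr_sumr mulVf // gt_eqF.
by move/M0; rewrite -scalemxAl uM scaler0 eqxx.
Qed.

(* A nonzero kernel vector cannot have all entries of one sign, since 0 is not a
   convex combination of the rows. *)
Lemma signed_kernel_vector (K k : nat) (M : 'M[R]_(K, k)) :
  zero_notin_conv_rows M -> ~~ row_free M ->
  exists w : 'rV[R]_K, [/\ w *m M = 0, \sum_r w 0 r <= 0 & exists r, 0 < w 0 r].
Proof.
move=> M0; rewrite -kermx_eq0 => /rowV0Pn[nu /sub_kermxP nuM nu_neq0].
wlog nu_le0 : nu nuM nu_neq0 / \sum_r nu 0 r <= 0.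
  move=> hw; have [|/ltW s_ge0] := lerP (\sum_r nu 0 r) 0; first exact: hw.
  apply: (hw (- nu)); rewrite ?mulNmx ?nuM ?oppr0 ?oppr_eq0 //.
  by under eq_bigr do rewrite mxE; rewrite sumrN oppr_le0.
exists nu; split=> //; have [r nu_r|nu_le] := pickP (fun r => 0 < nu 0 r); first by exists r.
suff : - nu = 0 by move/eqP; rewrite oppr_eq0 (negPf nu_neq0).
apply: (conv_rows_nonneg_eq0 M0); last by rewrite mulNmx nuM oppr0.
by move=> r; rewrite mxE oppr_ge0 leNgt nu_le.
Qed.

Lemma mulmx_rowsub_lift (K k : nat) (r0 : 'I_K.+1) (u : 'rV[R]_K.+1)
    (A : 'M[R]_(K.+1, k)) :
  u 0 r0 = 0 -> (\row_i u 0 (lift r0 i)) *m rowsub (lift r0) A = u *m A.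
Proof.
move=> u_r0; rewrite !mulmx_sum_row [RHS](bigD1_ord r0) //= u_r0 scale0r add0r.
by apply: eq_bigr => i _; rewrite mxE row_rowsub.
Qed.

Lemma zero_notin_conv_rows_lift (K k : nat) (r0 : 'I_K.+1) (M : 'M[R]_(K.+1, k)) :
  zero_notin_conv_rows M -> zero_notin_conv_rows (rowsub (lift r0) M).
Proof.
move=> M0 mu [mu_ge0 mu1].
pose ext := \row_r oapp (fun i => mu 0 i) 0 (unlift r0 r).
have ext_r0 : ext 0 r0 = 0 by rewrite mxE unlift_none.
have -> : mu = \row_i ext 0 (lift r0 i) by apply/rowP => i; rewrite !mxE liftK.
rewrite mulmx_rowsub_lift //; apply: M0; split.
  by move=> r; rewrite mxE; case: unlift => /=.
by rewrite (bigD1_ord r0) //= ext_r0 add0r -mu1; apply: eq_bigr => i _; rewrite mxE liftK.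
Qed.

(* Caratheodory step: moving lam along a kernel direction until a coordinate
   vanishes leaves lam *m M unchanged and only increases the total mass. *)
Lemma conv_rows_drop_row (K k : nat) (M : 'M[R]_(K.+1, k)) (lam : 'rV[R]_K.+1) :
  zero_notin_conv_rows M -> ~~ row_free M -> convex_row lam ->
  exists r0 (lam' : 'rV[R]_K),
    convex_row lam' /\ row_norm (lam' *m rowsub (lift r0) M) <= row_norm (lam *m M).
Proof.
move=> M0 Mnfree [lam_ge0 lam1].
have [w [wM w_le0 [r1 w_r1]]] := signed_kernel_vector M0 Mnfree.
have [t [r0 [t_ge0 mu_ge0 mu_r0]]] := ratio_test lam_ge0 w_r1.
set mu := lam - t *: w in mu_ge0 mu_r0.
have muM : mu *m M = lam *m M by rewrite mulmxBl -scalemxAl wM scaler0 subr0.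
set s := \sum_r mu 0 r.
have s_ge1 : 1 <= s.
  rewrite /s; under eq_bigr do rewrite !mxE.
  by rewrite sumrB lam1 -mulr_sumr lerDl oppr_ge0 mulr_ge0_le0.
have s_gt0 : 0 < s by apply: lt_le_trans s_ge1.
have sE : s = \sum_i mu 0 (lift r0 i) by rewrite /s (bigD1_ord r0) //= mu_r0 add0r.
exists r0, (s^-1 *: \row_i mu 0 (lift r0 i)); split; first split.
- by move=> i; rewrite 2!mxE mulr_ge0 ?invr_ge0 ?(ltW s_gt0).
- by under eq_bigr do rewrite 2!mxE; rewrite -mulr_sumr -sE mulVf // gt_eqF.
rewrite -scalemxAl mulmx_rowsub_lift // muM row_normZ ?invr_ge0 ?(ltW s_gt0) //.
by rewrite ler_piMl ?sqrtr_ge0 ?invf_le1.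
Qed.

Theorem conv_rows_norm_ge (K k : nat) (Mi : 'M[int]_(K, k)) (h : 'cV[R]_k) (N : R)
    (lam : 'rV[R]_K) :
  1 <= N -> h != 0 -> map_mx intr Mi *m h = 0 ->
  (forall r, \sum_a ((Mi r a)%:~R : R) ^+ 2 + 1 <= N ^+ 2) ->
  zero_notin_conv_rows (map_mx intr Mi) -> convex_row lam ->
  1 <= k%:R * N ^+ k.-1 * row_norm (lam *m map_mx intr Mi).
Proof.
move=> N_ge1 h_neq0; have N_ge0 : 0 <= N := le_trans ler01 N_ge1.
elim: K Mi lam => [|K IH] Mi lam Mh M_le M0 lam_conv; first by have := convex_row_gt0 lam_conv.
have [Mfree|Mnfree] := boolP (row_free (map_mx intr Mi : 'M[R]_(K.+1, k))).
  have K_lt : (K.+1 < k)%N.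
    have := mulmx0_rank_max Mh; rewrite (eqP Mfree).
    have : (0 < \rank h)%N by rewrite lt0n mxrank_eq0.
    lia.
  apply: le_trans (conv_rows_norm_ge_row_free N_ge0 Mfree M_le lam_conv.2) _.
  rewrite ler_wpM2r ?sqrtr_ge0 // ler_pM ?exprn_ge0 ?ler_nat //; first lia.
  by rewrite ler_weXn2l //; lia.
have [r0 [lam' [lam'_conv lam'_le]]] := conv_rows_drop_row M0 Mnfree lam_conv.
apply: le_trans (ler_wpM2l _ lam'_le); last by rewrite mulr_ge0 ?exprn_ge0.
rewrite -map_mxsub; apply: IH lam'_conv.
- by rewrite map_mxsub mul_rowsub_mx Mh; apply/matrixP => i j; rewrite !mxE.
- by move=> r; under eq_bigr do rewrite mxE; exact: M_le.
- by rewrite map_mxsub; exact: zero_notin_conv_rows_lift.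
Qed.

End ConvexMargin.



(** * Weights of the torus action *)

Lemma lmono_evec (k : nat) (t : 'rV[CC]_k) (i : 'I_k) : lmono t (evec i) = t 0 i.
Proof.
rewrite /lmono (bigD1 i) //= big1 ?mulr1 => [|a /negPf ai]; first by rewrite /evec eqxx.
by rewrite /evec ai.
Qed.

Lemma lmonoD (k : nat) (t : 'rV[CC]_k) (u w : 'I_k -> int) : nz_vec t ->
  lmono t (fun a => u a + w a) = lmono t u * lmono t w.
Proof. by move=> t_neq0; rewrite /lmono -big_split; apply: eq_bigr => a _; rewrite expfzDr. Qed.

Lemma lmonoN (k : nat) (t : 'rV[CC]_k) (u : 'I_k -> int) :
  lmono t (fun a => - u a) = (lmono t u)^-1.
Proof. by rewrite /lmono -prodfV; apply: eq_bigr => a _; rewrite invr_expz. Qed.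

Lemma lmono_const1 (k : nat) (w : 'I_k -> int) : lmono (const_mx 1) w = 1.
Proof. by rewrite /lmono big1 // => a _; rewrite mxE exp1rz. Qed.

(* Test on t = diag(1, .., 2, .., 1), where the character u takes the value 2^(u a). *)
Lemma lmono_inj (k : nat) (u w : 'I_k -> int) :
  (forall t : 'rV[CC]_k, nz_vec t -> lmono t u = lmono t w) -> u = w.
Proof.
move=> uw; apply: FunctionalExtensionality.functional_extensionality => a.
pose t : 'rV[CC]_k := \row_b (2 : CC) ^ evec a b.
have lmono_t v : lmono t v = 2 ^ v a.
  rewrite /lmono (bigD1 a) //= big1 ?mulr1 => [|b /negPf ba].
    by rewrite mxE /evec eqxx expr1z.
  by rewrite mxE /evec ba expr0z exp1rz.
have t_neq0 : nz_vec t by move=> b; rewrite mxE expfz_neq0 ?pnatr_eq0.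
by move: (uw t t_neq0); rewrite !lmono_t; apply: exprz_inj; rewrite ?ltr0n ?pnatr_eq1.
Qed.

Lemma act_tens_diag (m n : nat) (t : 'rV[CC]_m) (s : 'rV[CC]_n) (u : tens m n) l j i :
  nz_vec t -> act_tens (diag_mx t) (diag_mx s) u l j i =
  (s 0 l * (t 0 j)^-1 * t 0 i) *: poly_compinv (diag_mx s) (u l j i).
Proof.
move=> t_neq0; rewrite /act_tens invmx_diag //.
under eq_bigr do under eq_bigr do rewrite -scalerA.
under eq_bigr do rewrite -scaler_sumr.
rewrite sum_diag_mx_scale.
under eq_bigr do rewrite -[diag_mx (\row_a _)]tr_diag_mx [_^T _ _]mxE.
by rewrite sum_diag_mx_scale /act_sys /actX sum_diag_mx_scale !mxE !scalerA.
Qed.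

Lemma mcoeff_act_tens_diag (m n : nat) (t : 'rV[CC]_m) (s : 'rV[CC]_n) (u : tens m n)
    l j i (al : 'X_{1..n}) :
  nz_vec t -> nz_vec s ->
  (act_tens (diag_mx t) (diag_mx s) u l j i)@_al =
  lmono t (fun a => evec i a - evec j a) * lmono s (fun b => - (al b)%:Z + evec l b)
  * (u l j i)@_al.
Proof.
move=> t_neq0 s_neq0; rewrite act_tens_diag // mcoeffZ /poly_compinv invmx_diag //.
have -> : lin_subst (diag_mx (\row_a (s 0 a)^-1)) = [tuple (s 0 k)^-1 *: 'X_k | k < n].
  apply: eq_from_tnth => k; rewrite !tnth_mktuple (bigD1 k) //= big1 ?addr0.
    by rewrite !mxE eqxx mulr1n.
  by move=> q /negPf qk; rewrite mxE eq_sym qk mulr0n scale0r.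
rewrite mcoeff_comp_diag (lmonoD (evec i) (fun a => - evec j a) t_neq0).
rewrite (lmonoD (fun b => - (al b)%:Z) (evec l) s_neq0) !lmonoN !lmono_evec.
have -> : lmono s (fun b => (al b)%:Z) = \prod_k s 0 k ^+ al k by [].
under eq_bigr do rewrite exprVn; rewrite prodfV.
ring.
Qed.

Lemma lmono_pair_inj (m n : nat) (u' w' : 'I_m -> int) (u'' w'' : 'I_n -> int) :
  (forall t s, nz_vec t -> nz_vec s ->
     lmono t u' * lmono s u'' = lmono t w' * lmono s w'') -> u' = w' /\ u'' = w''.
Proof.
have one_neq0 k : nz_vec (const_mx 1 : 'rV[CC]_k) by move=> a; rewrite mxE oner_eq0.
move=> uw; split; apply: lmono_inj => t t_neq0.
  by have := uw t _ t_neq0 (one_neq0 n); rewrite !lmono_const1 !mulr1.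
by have := uw _ t (one_neq0 m) t_neq0; rewrite !lmono_const1 !mul1r.
Qed.

Definition weight_shape (m n D : nat) (w' : 'I_m -> int) (w'' : 'I_n -> int) : Prop :=
  exists (i j : 'I_m) (l : 'I_n) (alpha : 'I_n -> nat),
    (\sum_(k < n) alpha k <= D)%N /\
    w' = (fun a => evec i a - evec j a) /\
    w'' = (fun b => - (alpha b)%:Z + evec l b).

(* Compare both sides of the eigenvector equation at a nonzero coefficient. *)
Lemma weight_char (m n : nat) (d : 'I_m -> nat) (w' : 'I_m -> int) (w'' : 'I_n -> int) :
  is_weight d w' w'' -> weight_shape (\max_(i < m) d i) w' w''.
Proof.
move=> [u [u_rep [[l [j [i u_neq0]]] u_eig]]].
have [al al_supp] : exists al, al \in msupp (u l j i).
  by move: u_neq0; rewrite -msupp_eq0; case: msupp => // al ? _; exists al; rewrite mem_head.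
have al_neq0 : (u l j i)@_al != 0 by rewrite -mcoeff_msupp.
exists i, j, l, (fun b => al b); split.
  rewrite -mdegE (leq_trans _ (leq_bigmax i)) // -ltnS.
  exact: leq_trans (msize_mdeg_lt al_supp) (u_rep l j i).
apply: lmono_pair_inj => t s t_neq0 s_neq0; apply: (mulIf al_neq0).
have := congr1 (fun X : tens m n => (X l j i)@_al) (u_eig t s t_neq0 s_neq0).
by rewrite /= mcoeff_act_tens_diag // /tens_scale mcoeffZ.
Qed.

Lemma sum_evec (k : nat) (i : 'I_k) : \sum_a evec i a = 1.
Proof. by rewrite (bigD1 i) //= big1 ?addr0 => [|a /negPf ai]; rewrite /evec ?eqxx ?ai. Qed.

Lemma weight_shape_sum0 (m n D : nat) (w' : 'I_m -> int) (w'' : 'I_n -> int) :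
  weight_shape D w' w'' -> \sum_a w' a = 0.
Proof. by move=> [i [j [l [al [_ [-> _]]]]]]; rewrite sumrB !sum_evec subrr. Qed.

Lemma weight_shape_sqr_le (m n D : nat) (w' : 'I_m -> int) (w'' : 'I_n -> int) :
  weight_shape D w' w'' ->
  \sum_a w' a ^+ 2 + \sum_b w'' b ^+ 2 + 1 <= (D + 2)%:Z ^+ 2.
Proof.
move=> [i [j [l [al [al_le [-> ->]]]]]]; set S := (\sum_(k < n) al k)%N.
have le_i_j : \sum_a (evec i a - evec j a) ^+ 2 <= 2.
  apply: (@le_trans _ _ (\sum_a (evec i a + evec j a))); last by rewrite big_split /= !sum_evec.
  by apply: ler_sum => a _; rewrite /evec; case: (a == i); case: (a == j).
have le_al_l : \sum_b (- (al b)%:Z + evec l b) ^+ 2 <= (S * S)%N%:Z + 1.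
  apply: (@le_trans _ _ (\sum_b ((al b * S)%N%:Z + evec l b))).
    apply: ler_sum => b _; have : (al b <= S)%N by rewrite /S (bigD1 b) //= leq_addr.
    by rewrite /evec; case: (b == l) => /= al_le_S; nia.
  rewrite big_split /= sum_evec lerD2r; under eq_bigr do rewrite -natz.
  by rewrite -natr_sum natz /S big_distrl.
have : (S * S <= D * D)%N by rewrite leq_mul.
move: le_i_j le_al_l; rewrite [(_ + 2)%:Z ^+ 2]expr2.
move: (\sum_a _) (\sum_b _) => A B; lia.
Qed.

Definition pair_row (T : Type) (m n : nat) (a : 'I_m -> T) (b : 'I_n -> T) : 'rV[T]_(m + n) :=
  row_mx (\row_i a i) (\row_l b l).

Lemma wnorm_pair_row (m n : nat) (p' : 'I_m -> RR) (p'' : 'I_n -> RR) :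
  wnorm p' p'' = row_norm (pair_row p' p'').
Proof.
rewrite /wnorm /row_norm big_split_ord /pair_row.
by congr (Num.sqrt (_ + _)); apply: eq_bigr => a _; rewrite (row_mxEl, row_mxEr) mxE.
Qed.

Lemma weight_shape_row_le (m n D : nat) (w' : 'I_m -> int) (w'' : 'I_n -> int) :
  weight_shape D w' w'' ->
  \sum_a ((pair_row w' w'' 0 a)%:~R : RR) ^+ 2 + 1 <= (D + 2)%:R ^+ 2.
Proof.
move=> shape; rewrite [leRHS](_ : _ = ((D + 2)%:Z ^+ 2)%:~R); last by rewrite rmorphXn.
have -> : \sum_a ((pair_row w' w'' 0 a)%:~R : RR) ^+ 2 + 1 =
    (\sum_a w' a ^+ 2 + \sum_b w'' b ^+ 2 + 1)%:~R.
  rewrite !rmorphD /= !rmorph_sum big_split_ord /pair_row.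
  by congr (_ + _ + _); apply: eq_bigr => a _; rewrite (row_mxEl, row_mxEr) mxE rmorphXn.
by rewrite ler_int weight_shape_sqr_le.
Qed.

Lemma in_conv_mxP (m n : nat) (S : ('I_m -> int) -> ('I_n -> int) -> Prop)
    (p' : 'I_m -> RR) (p'' : 'I_n -> RR) :
  in_conv S p' p'' <->
  exists K (v' : 'I_K -> 'I_m -> int) (v'' : 'I_K -> 'I_n -> int) (lam : 'rV[RR]_K),
    [/\ forall r, S (v' r) (v'' r), convex_row lam &
        lam *m map_mx intr (\matrix_r pair_row (v' r) (v'' r)) = pair_row p' p''].
Proof.
have entryE K v' v'' (lam : 'rV[RR]_K) a :
    (lam *m map_mx intr (\matrix_r pair_row (v' r) (v'' r))) 0 a =
    \sum_r lam 0 r * (pair_row (v' r) (v'' r) 0 a)%:~R.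
  by rewrite mxE; apply: eq_bigr => r _; rewrite !mxE.
split=> [[K [v' [v'' [lam [Sv [lam_ge0 [lam1 [p'E p''E]]]]]]]] |
         [K [v' [v'' [lam [Sv [lam_ge0 lam1] lamE]]]]]].
  exists K, v', v'', (\row_r lam r); split=> //.
    by split=> [r|]; [rewrite mxE | under eq_bigr do rewrite mxE].
  apply/rowP => a; rewrite entryE -[a]splitK /pair_row.
  case: split => [i|l] /=; rewrite (row_mxEl, row_mxEr) mxE ?p'E ?p''E;
    by apply: eq_bigr => r _; rewrite (row_mxEl, row_mxEr) !mxE.
move/rowP in lamE; exists K, v', v'', (fun r => lam 0 r); do 3!split=> //; split=> [i|l].
  have := lamE (lshift n i); rewrite entryE /pair_row.
  by rewrite row_mxEl mxE => <-; apply: eq_bigr => r _; rewrite row_mxEl mxE.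
have := lamE (rshift m l); rewrite entryE /pair_row.
by rewrite row_mxEr mxE => <-; apply: eq_bigr => r _; rewrite row_mxEr mxE.
Qed.

Lemma pair_row_intr (m n : nat) (w' : 'I_m -> int) (w'' : 'I_n -> int) (a : 'I_(m + n)) :
  pair_row (fun i => (w' i)%:~R) (fun l => (w'' l)%:~R) 0 a = (pair_row w' w'' 0 a)%:~R :> RR.
Proof. by rewrite -[a]splitK /pair_row; case: split => i; rewrite ?row_mxEl ?row_mxEr !mxE. Qed.

Lemma weight_norm_le_shape (m n D : nat) (Om : ('I_m -> int) -> ('I_n -> int) -> Prop) :
  (forall w' w'', Om w' w'' -> weight_shape D w' w'') -> weight_norm_le Om (D + 2)%:R.
Proof.
move=> Om_shape w' w'' /Om_shape/weight_shape_row_le w_le.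
rewrite wnorm_pair_row -[leRHS]ger0_norm ?ler0n // -sqrtr_sqr ler_sqrt ?exprn_ge0 ?ler0n //.
under eq_bigr do rewrite pair_row_intr.
by apply: le_trans w_le; rewrite lerDl.
Qed.

Lemma pair_rows_mul_col_ones (R : pzRingType) (K m n : nat) (v' : 'I_K -> 'I_m -> int)
    (v'' : 'I_K -> 'I_n -> int) :
  (forall r, \sum_i v' r i = 0) ->
  map_mx intr (\matrix_r pair_row (v' r) (v'' r)) *m col_mx (const_mx 1) 0 = 0 :> 'cV[R]_K.
Proof.
move=> v'_sum0; apply/matrixP => r c; rewrite mxE [RHS]mxE big_split_ord /=.
rewrite [X in _ + X]big1 => [|l _]; last by rewrite col_mxEd !mxE mulr0.
rewrite addr0 -[RHS](rmorph0 (intr : int -> R)) -(v'_sum0 r) rmorph_sum.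
apply: eq_bigr => i _; rewrite col_mxEu [const_mx 1 _ _]mxE mulr1.
by rewrite 2!mxE /pair_row row_mxEl mxE.
Qed.

Lemma weight_margin_ge_shape (m n D : nat) (Om : ('I_m -> int) -> ('I_n -> int) -> Prop) :
  (forall w' w'', Om w' w'' -> weight_shape D w' w'') ->
  weight_margin_ge Om (((D + 2)%:R : RR) ^ (1 - (m + n)%:Z) / (m + n)%:R).
Proof.
move=> Om_shape S S_Om S0 p' p'' /in_conv_mxP[K [v' [v'' [lam [Sv lam_conv lamE]]]]].
set Mi := \matrix_r pair_row (v' r) (v'' r).
have shape r : weight_shape D (v' r) (v'' r) by apply/Om_shape/S_Om/Sv.
have [i0 _] := shape (Ordinal (convex_row_gt0 lam_conv)).
have h_neq0 : col_mx (const_mx 1) 0 != 0 :> 'cV[RR]_(m + n).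
  apply/negP => /eqP/matrixP/(_ (lshift n i0) 0).
  by rewrite col_mxEu !mxE => /eqP; rewrite oner_eq0.
have Mh := pair_rows_mul_col_ones RR v'' (fun r => weight_shape_sum0 (shape r)).
have M_le r : \sum_a ((Mi r a)%:~R : RR) ^+ 2 + 1 <= (D + 2)%:R ^+ 2.
  by under eq_bigr do rewrite mxE; exact: weight_shape_row_le.
have M0 : zero_notin_conv_rows (map_mx intr Mi : 'M[RR]_(K, m + n)).
  move=> mu mu_conv; apply/eqP => muM; apply: S0; apply/in_conv_mxP.
  exists K, v', v'', mu; split=> //; rewrite muM /pair_row -row_mx0.
  by congr row_mx; apply/rowP => a; rewrite !mxE.
have N_ge1 : 1 <= ((D + 2)%:R : RR) by rewrite ler1n addn2.
have := conv_rows_norm_ge N_ge1 h_neq0 Mh M_le M0 lam_conv.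
rewrite lamE -wnorm_pair_row; apply: exprzN_div_le N_ge1.
by have := ltn_ord i0; lia.
Qed.

Unset Implicit Arguments.
Set Strict Implicit.

Theorem mainTheorem15 (m n : nat) (d : 'I_m -> nat)
    (G : 'M[CC]_m -> 'M[CC]_n -> Prop) :
  symmetric_subgroup G -> contains_torus G ->
  let D := \max_(i < m) d i in
  (forall w' w'', @is_weight m n d w' w'' ->
     exists (i j : 'I_m) (l : 'I_n) (alpha : 'I_n -> nat),
       (\sum_(k < n) alpha k <= D)%N /\
       w' = (fun a => evec i a - evec j a) /\
       w'' = (fun b => - (alpha b)%:Z + evec l b)) /\
  weight_norm_le (@is_weight m n d) (D + 2)%:R /\
  weight_margin_ge (@is_weight m n d)
    (((D + 2)%:R : RR) ^ (1 - (m + n)%:Z) / (m + n)%:R).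
Proof.
move=> _ _ D; have shape := @weight_char m n d.
split; first exact: shape.
by split; [exact: weight_norm_le_shape | exact: weight_margin_ge_shape].
Qed.
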